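(* For all $n\geq 0$, $$m_n=\sum_{k=0}^{n}\binom{n}{k}d_k,$$ where $d_k$ is the number of symmetric Dyck paths of length $2k$ and $m_n$ is the number of symmetric Motzkin paths of length $2n$.
   Context: Steps: $U=(1,1)$, $D=(1,-1)$, $h=(1,0)$. A Dyck path of length $2n$ is a lattice path from $(0,0)$ to $(2n,0)$ using steps $U,D$ that never goes below the $x$-axis; a Motzkin path of length $2n$ is the same but steps $U,D,h$ are allowed. Such a path with step sequence $s_1s_2\cdots s_{2n}$ is symmetric if for every $i$, $s_{2n+1-i}$ is the mirror of $s_i$, where the mirror of $U$ is $D$, of $D$ is $U$, and of $h$ is $h$ (i.e. the path is invariant under reflection in the line $x=n$). $d_n$ denotes the number of symmetric Dyck paths of length $2n$ (so $d_n=\binom{n}{\lfloor n/2\rfloor}$) and $m_n$ the number of symmetric Motzkin paths of length $2n$. *)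

From HB Require Import structures.
From mathcomp Require Import all_boot.
Set Implicit Arguments. Unset Strict Implicit. Unset Printing Implicit Defensive.

(* Steps U=(1,1), D=(1,-1), h=(1,0). *)
Inductive step := U | D | H.

Definition step_to_nat (s : step) : nat := match s with U => 0 | D => 1 | H => 2 end.
Definition nat_to_step (n : nat) : option step :=
  match n with 0 => Some U | 1 => Some D | 2 => Some H | _ => None end.
Lemma step_pcancel : pcancel step_to_nat nat_to_step. Proof. by case. Qed.
HB.instance Definition _ := Countable.copy step (pcan_type step_pcancel).
Definition step_enum := [:: U; D; H].
Lemma step_enumP : Finite.axiom step_enum. Proof. by case. Qed.
HB.instance Definition _ := isFinite.Build step step_enumP.

(* Heights are compared via step counts (avoiding signed integers):
   the height after the first i steps is  #U(prefix) - #D(prefix). *)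
Definition nU (p : seq step) (i : nat) : nat := count (pred1 U) (take i p).
Definition nD (p : seq step) (i : nat) : nat := count (pred1 D) (take i p).

Definition is_path (p : seq step) : bool :=
  [forall i : 'I_(size p).+1, nD p i <= nU p i] && (nU p (size p) == nD p (size p)).

Definition is_dyck (p : seq step) : bool := is_path p && (H \notin p).
Definition is_motzkin (p : seq step) : bool := is_path p.

Definition mirror (s : step) : step := match s with U => D | D => U | H => H end.

Definition sym_path (p : seq step) : bool :=
  [forall i : 'I_(size p), nth H p (size p - 1 - i) == mirror (nth H p i)].

Definition d (n : nat) : nat :=
  #|[set p : (2 * n).-tuple step | is_dyck p && sym_path p]|.
Definition m (n : nat) : nat :=
  #|[set p : (2 * n).-tuple step | is_motzkin p && sym_path p]|.

From mathcomp Require Import all_boot.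
From mathcomp Require Import zify.

(* A symmetric path of length 2n is determined by its first half q, and it is
   a path iff q is a meander (never below the axis, ending anywhere): the
   mirrored second half walks back down from the final height of q to 0.  So
   m_n and d_n count Motzkin and Dyck meanders of length n.  Counting meanders
   M(n,h), D(n,h) started at height h by their first step gives
     M(n+1,h) = M(n,h+1) + [h>0] M(n,h-1) + M(n,h),
     D(n+1,h) = D(n,h+1) + [h>0] D(n,h-1),
   and these together with Pascal's rule give M(n,h) = sum_k C(n,k) D(k,h) by
   induction on n; combinatorially, k counts the non-level steps. *)

Definition next_height (s : step) (h : nat) : nat :=
  match s with U => h.+1 | D => h.-1 | H => h end.

Definition height (h : nat) (p : seq step) : nat :=
  foldl (fun h s => next_height s h) h p.

Fixpoint meander (h : nat) (p : seq step) : bool :=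
  if p is s :: p' then ((s != D) || (0 < h)) && meander (next_height s h) p'
  else true.

Definition excursion (h : nat) (p : seq step) : bool :=
  meander h p && (height h p == 0).

Lemma height_cat h q r : height h (q ++ r) = height (height h q) r.
Proof. exact: foldl_cat. Qed.

Lemma meander_cat h q r :
  meander h (q ++ r) = meander h q && meander (height h q) r.
Proof. by elim: q h => [|s q IH] h //=; rewrite IH andbA. Qed.

Lemma nU_consS s p i : nU (s :: p) i.+1 = (s == U) + nU p i. Proof. by []. Qed.
Lemma nD_consS s p i : nD (s :: p) i.+1 = (s == D) + nD p i. Proof. by []. Qed.

Lemma meanderP h p : reflect (forall i, nD p i <= h + nU p i) (meander h p).
Proof.
elim: p h => [|s p IH] h /=; first by apply: ReflectT => i; case: i.
apply: (iffP andP) => [[hs /IH hp] [|i] // | hp].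
  by rewrite nU_consS nD_consS; move: hs (hp i) => {hp}; case: s => /=; lia.
have hs : (s != D) || (0 < h).
  by move: (hp 1) => {hp}; rewrite nU_consS nD_consS /nD /nU take0; case: s => /=; lia.
split=> //; apply/IH => i; move: hs (hp i.+1) => {hp}; rewrite nU_consS nD_consS.
by case: s => /=; lia.
Qed.

Lemma height_count h p :
  meander h p -> height h p + nD p (size p) = h + nU p (size p).
Proof.
elim: p h => [|s p IH] h //=.
rewrite nU_consS nD_consS => /andP[hs /IH].
by rewrite /height /=; case: s hs => /=; lia.
Qed.

Lemma is_path_excursion p : is_path p = excursion 0 p.
Proof.
have nUD_oversize i : size p <= i -> (nU p i, nD p i) = (nU p (size p), nD p (size p)).
  by move=> hi; rewrite /nU /nD !take_oversize.
apply/andP/andP => [[/forallP hp /eqP hpU] | [/meanderP hp /eqP h0]].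
  have hm : meander 0 p.
    apply/meanderP => i; case: (leqP i (size p)) => hi.
      exact: (hp (Ordinal (hi : i < (size p).+1))).
    by case: (nUD_oversize i (ltnW hi)) => -> ->; exact: (hp ord_max).
  by split=> //; apply/eqP; move: (height_count 0 p hm); lia.
split; first by apply/forallP => i; exact: hp.
by apply/eqP; move: (height_count 0 p (introT (meanderP 0 p) hp)); lia.
Qed.

Lemma mirrorK : involutive mirror. Proof. by case. Qed.

Definition symmetrize (q : seq step) : seq step := q ++ rev (map mirror q).

Lemma next_height_mirror s h e :
  ((mirror s != D) || (0 < h)) && (e == next_height (mirror s) h)
  = ((s != D) || (0 < e)) && (next_height s e == h).
Proof. by case: s => //=; [case: h | case: e]. Qed.

Lemma excursion_rev_mirror h q :
  excursion h (rev (map mirror q)) = meander 0 q && (height 0 q == h).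
Proof.
elim/last_ind: q h => [|q s IH] h; first by rewrite /excursion /= eq_sym.
rewrite map_rcons rev_rcons -cats1 meander_cat height_cat /excursion /=.
by rewrite -andbA -/(excursion _ _) IH andbT andbCA -andbA next_height_mirror.
Qed.

Lemma excursion_symmetrize q : excursion 0 (symmetrize q) = meander 0 q.
Proof.
by rewrite /excursion meander_cat height_cat -andbA -/(excursion _ _)
  excursion_rev_mirror eqxx andbT andbb.
Qed.

Lemma is_path_symmetrize q : is_path (symmetrize q) = meander 0 q.
Proof. by rewrite is_path_excursion excursion_symmetrize. Qed.

Lemma mem_symmetrize s q : mirror s = s -> (s \in symmetrize q) = (s \in q).
Proof.
move=> fix_s; rewrite mem_cat mem_rev -{2}fix_s.
by rewrite (mem_map (inv_inj mirrorK)) orbb.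
Qed.

Lemma is_dyck_symmetrize q : is_dyck (symmetrize q) = meander 0 q && (H \notin q).
Proof. by rewrite /is_dyck is_path_symmetrize mem_symmetrize. Qed.

Lemma sym_pathE p : sym_path p = (rev p == map mirror p).
Proof.
apply/forallP/eqP => [sym_p | rev_p i].
  apply: (eq_from_nth (x0 := H)) => [|i]; first by rewrite size_rev size_map.
  rewrite size_rev => lt_ip; rewrite nth_rev // (nth_map H) //.
  by move/eqP: (sym_p (Ordinal lt_ip)) => /= <-; congr nth; lia.
have lt_ip := ltn_ord i.
move: (congr1 (nth H ^~ i) rev_p); rewrite /= nth_rev // (nth_map H) // => <-.
by apply/eqP; congr nth; lia.
Qed.

Lemma sym_path_symmetrize n p :
  size p = 2 * n -> sym_path p = (p == symmetrize (take n p)).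
Proof.
move=> size_p; rewrite sym_pathE /symmetrize; apply/eqP/eqP => [rev_p | ->]; last first.
  by rewrite rev_cat revK map_cat map_rev (mapK mirrorK).
rewrite -{1}(cat_take_drop n p); congr (_ ++ _).
have -> : drop n p = rev (take n (rev p)) by rewrite take_rev revK size_p; congr drop; lia.
by rewrite rev_p map_take.
Qed.

Lemma size_symmetrize q : size (symmetrize q) = 2 * size q.
Proof. by rewrite size_cat size_rev size_map; lia. Qed.

Lemma card_sym_path n (P : pred (seq step)) :
  #|[set p : (2 * n).-tuple step | P p && sym_path p]|
  = #|[set q : n.-tuple step | P (symmetrize q)]|.
Proof.
have size_sym (q : n.-tuple step) : size (symmetrize q) == 2 * n.
  by rewrite size_symmetrize size_tuple.
pose sym_tuple q := Tuple (size_sym q).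
have take_sym (q : n.-tuple step) : take n (symmetrize q) = q.
  by rewrite /symmetrize take_size_cat ?size_tuple.
have sym_tuple_inj : injective sym_tuple.
  by move=> q1 q2 /(congr1 (take n \o val)) /=; rewrite !take_sym => /val_inj.
rewrite -(card_imset _ sym_tuple_inj); apply: eq_card => p; rewrite !inE.
rewrite (sym_path_symmetrize n p (size_tuple p)); apply/andP/imsetP.
  move=> [P_p /eqP p_sym].
  have size_take : size (take n p) == n by rewrite size_takel // size_tuple; lia.
  exists (Tuple size_take); first by rewrite inE /= -p_sym.
  exact: val_inj.
move=> [q]; rewrite inE => P_q -> /=.
by rewrite take_sym.
Qed.

Fixpoint words (n : nat) : seq (seq step) :=
  if n is n'.+1 then [seq s :: w | s <- [:: U; D; H], w <- words n'] else [:: [::]].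

Lemma mem_words n w : (w \in words n) = (size w == n).
Proof.
elim: n w => [|n IH] w; first by case: w.
apply/allpairsP/idP => [[[s w'] /= [_ w'_n ->]] | ]; first by rewrite /= eqSS -IH.
case: w => [|s w] //=; rewrite eqSS -IH => w_n.
by exists (s, w); split=> //; case: s.
Qed.

Lemma words_uniq n : uniq (words n).
Proof.
elim: n => [|n IH] //; apply: allpairs_uniq => //.
by move=> [s1 w1] [s2 w2] _ _ /= [-> ->].
Qed.

Lemma card_tuple_count n (Q : pred (seq step)) :
  #|[set q : n.-tuple step | Q q]| = count Q (words n).
Proof.
rewrite -sum1dep_card -sum1_count -(big_map val Q (fun=> 1)).
apply: perm_big; apply: uniq_perm.
- by rewrite (map_inj_uniq val_inj) index_enum_uniq.
- exact: words_uniq.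
move=> w; rewrite mem_words; apply/mapP/idP => [[q _ ->] | w_n].
  by rewrite size_tuple.
by exists (Tuple w_n); rewrite ?mem_index_enum.
Qed.

Definition meanders (n h : nat) : nat := count (meander h) (words n).

Definition dyck_meanders (n h : nat) : nat :=
  count (fun w => meander h w && (H \notin w)) (words n).

Lemma meandersS n h :
  meanders n.+1 h = meanders n h.+1 + (0 < h) * meanders n h.-1 + meanders n h.
Proof.
rewrite /meanders /= !count_cat !count_map addn0 addnA.
congr (_ + _ + _); try by apply: eq_count.
case: h => [|h]; last by rewrite mul1n; apply: eq_count.
by rewrite (@eq_count _ _ pred0) ?count_pred0.
Qed.

Lemma dyck_meandersS n h :
  dyck_meanders n.+1 h = dyck_meanders n h.+1 + (0 < h) * dyck_meanders n h.-1.
Proof.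
rewrite /dyck_meanders /= !count_cat !count_map addn0 addnA.
rewrite (@eq_count _ (preim (cons H) _) pred0) ?count_pred0 ?addn0; last first.
  by move=> w /=; rewrite andbF.
congr (_ + _).
case: h => [|h]; last by rewrite mul1n; apply: eq_count.
by rewrite (@eq_count _ _ pred0) ?count_pred0.
Qed.

Lemma sum_binS (F : nat -> nat) n :
  \sum_(k < n.+2) 'C(n.+1, k) * F k
  = \sum_(k < n.+1) 'C(n, k) * F k.+1 + \sum_(k < n.+1) 'C(n, k) * F k.
Proof.
rewrite big_ord_recl bin0 mul1n.
under eq_bigr => k _ do rewrite lift0 binS mulnDl.
rewrite big_split /= addnA addnC; congr (_ + _).
rewrite [RHS]big_ord_recl bin0 mul1n big_ord_recr /= bin_small // mul0n addn0.
by congr (_ + _); apply: eq_bigr => k _; rewrite lift0.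
Qed.

Lemma meanders_binomial n h :
  meanders n h = \sum_(k < n.+1) 'C(n, k) * dyck_meanders k h.
Proof.
elim: n h => [|n IH] h; first by rewrite big_ord1.
rewrite meandersS (sum_binS (dyck_meanders ^~ h)) !IH.
congr (_ + _); rewrite big_distrr -big_split /=.
by apply: eq_bigr => k _; rewrite dyck_meandersS mulnDr mulnCA.
Qed.

Theorem theorem3p1 (n : nat) : m n = \sum_(0 <= k < n.+1) 'C(n, k) * d k.
Proof.
have m_meanders : m n = meanders n 0.
  rewrite /m (card_sym_path n is_motzkin) (card_tuple_count n (is_motzkin \o symmetrize)).
  by apply: eq_count => q; exact: is_path_symmetrize.
have d_meanders k : d k = dyck_meanders k 0.
  rewrite /d (card_sym_path k is_dyck) (card_tuple_count k (is_dyck \o symmetrize)).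
  by apply: eq_count => q; exact: is_dyck_symmetrize.
rewrite m_meanders meanders_binomial big_mkord.
by apply: eq_bigr => k _; rewrite d_meanders.
Qed.
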